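(* Let $n\ge1$ and let $A_1,\dots,A_n\subset\omega$ be co-infinite. Consider the equivalence relation on $\mathrm{Inj}(n\times\omega,\omega)$ generated by $\phi\sim\phi\circ(f_1\amalg\dots\amalg f_n)$ for all $\phi\in\mathrm{Inj}(n\times\omega,\omega)$ and $f_i\in\mathcal M_{A_i}$ ($i=1,\dots,n$). Then two elements of $\mathrm{Inj}(n\times\omega,\omega)$ are equivalent if and only if they agree on $\{i\}\times A_i\subset n\times\omega$ for all $i=1,\dots,n$.
   Context: $\omega=\{1,2,\dots\}$, $n=\{1,\dots,n\}$, $\mathcal M$ the monoid of injections $\omega\to\omega$, $\mathcal M_A$ the submonoid of injections fixing $A$ elementwise. $\mathrm{Inj}(n\times\omega,\omega)$ is the set of injections $n\times\omega\to\omega$, and $f_1\amalg\dots\amalg f_n$ is the self-map of $n\times\omega$ sending $(i,t)$ to $(i,f_i(t))$. A subset of $\omega$ is co-infinite if its complement is infinite. *)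

From mathcomp Require Import all_boot.
From Stdlib Require Import Relations.Relation_Operators.
Set Implicit Arguments. Unset Strict Implicit. Unset Printing Implicit Defensive.

Definition coinfinite (A : nat -> Prop) : Prop :=
  forall m : nat, exists k : nat, m <= k /\ ~ A k.

Definition in_MA (A : nat -> Prop) (f : nat -> nat) : Prop :=
  injective f /\ (forall a, A a -> f a = a).

Definition Inj (n : nat) := { phi : 'I_n * nat -> nat | injective phi }.

Definition coprod (n : nat) (f : 'I_n -> nat -> nat) (p : 'I_n * nat) : 'I_n * nat :=
  (p.1, f p.1 p.2).

Definition gen_step (n : nat) (A : 'I_n -> nat -> Prop) (phi psi : Inj n) : Prop :=
  exists f : 'I_n -> nat -> nat,
    (forall i, in_MA (A i) (f i)) /\
    (forall p, proj1_sig psi p = proj1_sig phi (coprod f p)).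

Definition inj_equiv (n : nat) (A : 'I_n -> nat -> Prop) : Inj n -> Inj n -> Prop :=
  clos_refl_sym_trans (Inj n) (gen_step A).

(* Agreement on the A-part is invariant under the generating steps.  Conversely, psi is
   one step below phi as soon as they agree on the A-part and every value of psi on
   {i} x (omega \ A_i) is a value of phi on {i} x omega.  Given phi and psi agreeing on
   the A-part, enumerate each complement of A_i as e_i and build an injection chi that
   agrees with both on the A-part and takes values of phi at the positions e_i(2k) and
   values of psi at the positions e_i(2k+1); these values can be chosen pairwise distinct
   because phi and psi take unboundedly many values on each complement.  Restricting chi
   to the even, resp. odd, positions yields a common lower bound of chi and phi,
   resp. chi and psi. *)
From mathcomp Require Import all_boot.
From Stdlib Require Import ClassicalEpsilon Relations.Relation_Operators.
Set Implicit Arguments. Unset Strict Implicit. Unset Printing Implicit Defensive.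

Definition unbounded (X : nat -> Prop) : Prop := forall m, exists x, m <= x /\ X x.

Lemma increasing_choice (X : nat -> nat -> Prop) :
  (forall k, unbounded (X k)) ->
  exists x : nat -> nat, (forall k, X k (x k)) /\ {homo x : k l / k < l}.
Proof.
move=> X_unb.
have [g gP] := choice (fun km y => km.2 <= y /\ X km.1 y) (fun km => X_unb km.1 km.2).
pose fix x k := if k is l.+1 then g (k, (x l).+1) else g (0, 0).
exists x; split; first by case=> [|k]; [exact: (gP (0, 0)).2 | exact: (gP (k.+1, _)).2].
apply: (@homo_ltn _ x (fun a b => a < b)); first exact: ltn_trans.
by move=> k; case: (gP (k.+1, (x k).+1)).
Qed.

Lemma countable_injective_choice (S : countType) (X : S -> nat -> Prop) :
  (forall s, unbounded (X s)) -> exists x : S -> nat, injective x /\ forall s, X s (x s).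
Proof.
move=> X_unb.
pose Y m := if unpickle m is Some s then X s else fun _ => True.
have Y_unb m : unbounded (Y m).
  by rewrite /Y; case: unpickle => [s|]; [exact: X_unb | move=> T; exists T].
have [y [yY y_inc]] := increasing_choice Y_unb.
exists (y \o pickle); split.
  exact: inj_comp (incn_inj (leq_mono y_inc)) (pcan_inj pickleK).
by move=> s; have := yY (pickle s); rewrite /Y pickleK.
Qed.

Lemma unbounded_enum (X : nat -> Prop) :
  unbounded X -> exists e : nat -> nat, injective e /\ forall k, X (e k).
Proof. by move=> X_unb; apply: (countable_injective_choice (X := fun _ : nat => X)). Qed.

Lemma injective_unbounded (g : nat -> nat) :
  injective g -> unbounded (fun v => exists k, v = g k).
Proof.
move=> g_inj m; case: (boolP [exists k : 'I_m.+1, m <= g k]) => [/existsP [k gk]|].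
  by exists (g k); split=> //; exists (val k).
move/existsPn=> small; exfalso.
have lt_m (k : 'I_m.+1) : g k < m by rewrite ltnNge small.
pose h (k : 'I_m.+1) : 'I_m := Ordinal (lt_m k).
suff /leq_card : injective h by rewrite !card_ord ltnn.
by move=> k l /(congr1 val) /g_inj /val_inj.
Qed.

Lemma unbounded_inj_image (X : nat -> Prop) (g : nat -> nat) :
  unbounded X -> injective g -> unbounded (fun v => exists x, X x /\ v = g x).
Proof.
move=> /unbounded_enum [e [e_inj eX]] g_inj m.
have [v [le_m [k def_v]]] := injective_unbounded (inj_comp g_inj e_inj) m.
by exists v; split=> //; exists (e k); split.
Qed.

Definition id_on (B : nat -> Prop) (g : nat -> nat) (b : nat) : nat :=
  if excluded_middle_informative (B b) then b else g b.

Lemma id_on_in (B : nat -> Prop) g b : B b -> id_on B g b = b.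
Proof. by rewrite /id_on; case: excluded_middle_informative. Qed.

Lemma id_on_out (B : nat -> Prop) g b : ~ B b -> id_on B g b = g b.
Proof. by rewrite /id_on; case: excluded_middle_informative. Qed.

Lemma id_on_inj (B : nat -> Prop) g :
  injective g -> (forall b, ~ B (g b)) -> injective (id_on B g).
Proof.
move=> g_inj g_out a b.
case: (classic (B a)) => Ba; case: (classic (B b)) => Bb;
  rewrite ?(id_on_in _ Ba) ?(id_on_in _ Bb) ?(id_on_out _ Ba) ?(id_on_out _ Bb) //.
- by move=> ab; case: (g_out b); rewrite -ab.
- by move=> ab; case: (g_out a); rewrite ab.
- exact: g_inj.
Qed.

Section Reindexing.
Variables (n : nat) (A : 'I_n -> nat -> Prop).

Definition agree_on_A (phi psi : Inj n) : Prop :=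
  forall (i : 'I_n) (a : nat), A i a -> sval phi (i, a) = sval psi (i, a).

Definition offA_image (rho : Inj n) (i : 'I_n) (v : nat) : Prop :=
  exists b, ~ A i b /\ v = sval rho (i, b).

Lemma inj_equiv_agree (phi psi : Inj n) : inj_equiv A phi psi -> agree_on_A phi psi.
Proof.
elim=> {phi psi} [phi psi [f [f_MA psiE]]|phi|phi psi _ IH|phi chi psi _ IH1 _ IH2] i a Aa //.
- by rewrite psiE /coprod /= (proj2 (f_MA i)).
- by rewrite IH.
- by rewrite IH1 // IH2.
Qed.

Lemma offA_image_unbounded (rho : Inj n) i :
  coinfinite (A i) -> unbounded (offA_image rho i).
Proof. by move=> A_coinf; apply: unbounded_inj_image A_coinf _ => a b /(svalP rho) [->]. Qed.

Lemma offA_image_avoids_A (rho : Inj n) i j a v :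
  offA_image rho i v -> A j a -> sval rho (j, a) <> v.
Proof. by move=> [b [nAb ->]] Aa /(svalP rho) [ji ab]; subst; apply: nAb. Qed.

Lemma coprod_inj (f : 'I_n -> nat -> nat) : (forall i, injective (f i)) -> injective (coprod f).
Proof. by move=> f_inj [i x] [j y] [ij]; subst j => /f_inj ->. Qed.

Definition precomp (phi : Inj n) (f : 'I_n -> nat -> nat)
    (f_inj : forall i, injective (f i)) : Inj n :=
  exist _ (sval phi \o coprod f) (inj_comp (svalP phi) (coprod_inj f_inj)).

Lemma gen_step_factor (phi psi : Inj n) (f : 'I_n -> nat -> nat) :
  (forall i a, A i a -> f i a = a) ->
  (forall p, sval psi p = sval phi (coprod f p)) -> gen_step A phi psi.
Proof.
move=> fA psiE; exists f; split=> // i; split=> [x y fxy|]; last exact: fA.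
suff /(congr1 snd) : (i, x) = (i, y) by [].
by apply: (svalP psi); rewrite !psiE /coprod /= fxy.
Qed.

Lemma gen_step_precomp (phi : Inj n) f (f_inj : forall i, injective (f i)) :
  (forall i a, A i a -> f i a = a) -> gen_step A phi (precomp phi f_inj).
Proof. by move=> fA; apply: gen_step_factor fA _. Qed.

Lemma gen_step_of_image (phi psi : Inj n) :
  agree_on_A psi phi ->
  (forall i b, ~ A i b -> exists b', sval psi (i, b) = sval phi (i, b')) ->
  gen_step A phi psi.
Proof.
move=> psi_phi psi_img.
have [f fP] : exists f : 'I_n -> nat -> nat, forall i b,
    (A i b -> f i b = b) /\ sval psi (i, b) = sval phi (i, f i b).
  apply: (choice (fun i g => forall b,
    (A i b -> g b = b) /\ sval psi (i, b) = sval phi (i, g b))) => i.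
  apply: (choice (fun b c => (A i b -> c = b) /\ sval psi (i, b) = sval phi (i, c))) => b.
  case: (classic (A i b)) => [Ab | nAb]; first by exists b; split=> //; apply: psi_phi.
  by have [b' ->] := psi_img i b nAb; exists b'.
by apply: (gen_step_factor (f := f)) => [i a /(fP i a).1 | [i b]]; last exact: (fP i b).2.
Qed.

End Reindexing.

Section Interpolation.
Variables (n : nat) (A : 'I_n -> nat -> Prop) (phi psi : Inj n).
Hypothesis phi_psi : agree_on_A A phi psi.
Variable e : 'I_n -> nat -> nat.
Hypotheses (e_inj : forall i, injective (e i)) (e_offA : forall i k, ~ A i (e i k)).

Definition even_position (i : 'I_n) (b : nat) : Prop := exists k, b = e i k.*2.

Definition position_target (p : 'I_n * nat) (v : nat) : Prop :=
  (even_position p.1 p.2 -> offA_image A phi p.1 v) /\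
  (~ even_position p.1 p.2 -> offA_image A psi p.1 v).

Lemma position_target_unbounded :
  (forall i, coinfinite (A i)) -> forall p, unbounded (position_target p).
Proof.
move=> A_coinf [i b] m; case: (classic (even_position i b)) => ev.
  have [v [le_mv img]] := offA_image_unbounded phi (A_coinf i) m.
  by exists v; split=> //; split.
have [v [le_mv img]] := offA_image_unbounded psi (A_coinf i) m.
by exists v; split=> //; split.
Qed.

Variable x : 'I_n * nat -> nat.
Hypotheses (x_inj : injective x) (x_target : forall p, position_target p (x p)).

Lemma x_avoids_A p j a : A j a -> sval phi (j, a) <> x p.
Proof.
move=> Aa; case: (x_target p) => to_phi to_psi.
case: (classic (even_position p.1 p.2)) => [/to_phi | /to_psi] img.
  exact: offA_image_avoids_A img Aa.
by rewrite phi_psi //; apply: offA_image_avoids_A img Aa.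
Qed.

Definition chi_fun (p : 'I_n * nat) : nat :=
  if excluded_middle_informative (A p.1 p.2) then sval phi p else x p.

Lemma chi_fun_A i a : A i a -> chi_fun (i, a) = sval phi (i, a).
Proof. by rewrite /chi_fun; case: excluded_middle_informative. Qed.

Lemma chi_fun_offA i b : ~ A i b -> chi_fun (i, b) = x (i, b).
Proof. by rewrite /chi_fun; case: excluded_middle_informative. Qed.

Lemma chi_fun_inj : injective chi_fun.
Proof.
move=> [i a] [j b]; case: (classic (A i a)) => Aa; case: (classic (A j b)) => Ab;
  rewrite ?(chi_fun_A Aa) ?(chi_fun_A Ab) ?(chi_fun_offA Aa) ?(chi_fun_offA Ab).
- exact: (svalP phi).
- by move/(x_avoids_A Aa).
- by move/esym/(x_avoids_A Ab).
- exact: x_inj.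
Qed.

Definition chi : Inj n := exist _ chi_fun chi_fun_inj.

Section Restriction.
Variables (d : nat -> nat) (d_inj : injective d).

Definition along (i : 'I_n) : nat -> nat := id_on (A i) (e i \o d).

Lemma along_inj i : injective (along i).
Proof. by apply: id_on_inj; [exact: inj_comp (@e_inj i) d_inj | move=> k; exact: e_offA]. Qed.

Definition chi_along : Inj n := precomp chi along_inj.

Lemma gen_step_chi_along : gen_step A chi chi_along.
Proof. by apply: gen_step_precomp => i a; apply: id_on_in. Qed.

Lemma chi_along_A i a : A i a -> sval chi_along (i, a) = sval phi (i, a).
Proof. by move=> Aa; rewrite /= /coprod /along /= id_on_in // chi_fun_A. Qed.

Lemma chi_along_offA i b : ~ A i b -> sval chi_along (i, b) = x (i, e i (d b)).
Proof.
by move=> nAb; rewrite /= /coprod /along /= id_on_out // chi_fun_offA //; apply: e_offA.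
Qed.

End Restriction.

Lemma gen_step_phi_even : gen_step A phi (chi_along double_inj).
Proof.
apply: gen_step_of_image => [i a /chi_along_A //|i b nAb].
have [to_phi _] := x_target (i, e i b.*2).
have [b' [_ img]] : offA_image A phi i (x (i, e i b.*2)) by apply: to_phi; exists b.
by exists b'; rewrite chi_along_offA.
Qed.

Lemma gen_step_psi_odd : gen_step A psi (chi_along (inj_comp succn_inj double_inj)).
Proof.
apply: gen_step_of_image => [i a Aa|i b nAb]; first by rewrite chi_along_A // phi_psi.
have [_ to_psi] := x_target (i, e i b.*2.+1).
have [b' [_ img]] : offA_image A psi i (x (i, e i b.*2.+1)).
  by apply: to_psi => -[k /e_inj /(congr1 odd)]; rewrite /= !odd_double.
by exists b'; rewrite chi_along_offA.
Qed.

Lemma interpolation_inj_equiv : inj_equiv A phi psi.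
Proof.
pose chi_even := chi_along double_inj.
pose chi_odd := chi_along (inj_comp succn_inj double_inj).
apply: (rst_trans _ _ _ chi_even); first exact/rst_step/gen_step_phi_even.
apply: (rst_trans _ _ _ chi); first exact/rst_sym/rst_step/gen_step_chi_along.
apply: (rst_trans _ _ _ chi_odd); first exact/rst_step/gen_step_chi_along.
exact/rst_sym/rst_step/gen_step_psi_odd.
Qed.

End Interpolation.

Lemma agree_inj_equiv (n : nat) (A : 'I_n -> nat -> Prop) (phi psi : Inj n) :
  (forall i, coinfinite (A i)) -> agree_on_A A phi psi -> inj_equiv A phi psi.
Proof.
move=> A_coinf phi_psi.
have [e e_spec] : exists e : 'I_n -> nat -> nat,
    forall i, injective (e i) /\ forall k, ~ A i (e i k).
  apply: (choice (fun i g => injective g /\ forall k, ~ A i (g k))) => i.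
  exact: (@unbounded_enum (fun k => ~ A i k) (A_coinf i)).
have [x [x_inj x_target]] :=
  countable_injective_choice (position_target_unbounded phi psi e A_coinf).
exact: (interpolation_inj_equiv phi_psi (fun i => (e_spec i).1) (fun i => (e_spec i).2) x_inj).
Qed.

Theorem lemma2p27 (n : nat) (A : 'I_n -> nat -> Prop) :
  1 <= n ->
  (forall i, coinfinite (A i)) ->
  forall phi psi : Inj n,
    inj_equiv A phi psi <->
    (forall (i : 'I_n) (a : nat), A i a -> proj1_sig phi (i, a) = proj1_sig psi (i, a)).
Proof.
move=> _ A_coinf phi psi; split; first exact: inj_equiv_agree.
exact: agree_inj_equiv.
Qed.
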